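(* Let $p$ be an odd prime and take $k=0$. For every $s\ge2$, the $p^0$-Fibonacci number of the vertex $V_{s,0}=\lambda\big(2sp-(2s+1),\,sp-(s+1)\big)$ on floor $2s$ is $$\mathcal M_{V_{s,0}}=\frac{p-1}{2}\Big(2(s-1)p^{s-1}-(2s-3)p^{s-2}\Big).$$
   Context: Fix an odd prime $p$ and an integer $k\ge 0$. For integers $0\le i<n$ write $\lambda(n,i)=(n-i,1^i)$ for the hook partition of $n$ with $n-i$ boxes in its first row and $i$ further boxes in its first column. If $\mu=\lambda(n',i')$ is obtained from $\lambda(n,i)$ by appending $m=(n'-i')-(n-i)\ge 0$ boxes to the first row and $n''=i'-i\ge 0$ boxes to the first column, we say $\mu$ is obtained by adding the block $B_{m,n''}$ ($m$ horizontal nodes, $n''$ vertical nodes). Put $x_s=p^k(sp-(s+1))$. The relevant part (''column $k$'') of the $p$-Bratteli diagram is the graded directed graph with vertices: on floor $2k+1$, $S_i=\lambda(p^k(p-1),i)$ for $0\le i<p^k(p-1)$; on floor $2(k+s)$ ($s\ge1$), $V_{s,l}=\lambda\big(p^k(2sp-(2s+1)),\,x_s+l\big)$ for $0\le l<p^k$; on floor $2(k+s)-1$ ($s\ge2$), $W_{s,l'}=\lambda\big(p^k((2s-1)p-2s),\,x_{s-1}+l'\big)$ for $0\le l'<p^{k+1}$; and edges, each labelled by the block added: (E1) $S_i\to V_{1,l}$ exactly when $i=p^kt+l$ with $0\le t\le p-2$, block $B_{p^kt,\,p^k(p-2-t)}$; (E2) for $s\ge2$, $0\le l<p^k$, $0\le\beta\le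 p-1$: $V_{s-1,l}\to W_{s,pl+\beta}$, block $B_{p^k(p-1)-((p-1)l+\beta),\,(p-1)l+\beta}$; (E3) for $s\ge 2$, $0\le l'<p^{k+1}$ and $t=\lfloor l'/p^k\rfloor$: $W_{s,l'}\to V_{s,l'-p^kt}$, block $B_{p^kt,\,p^k(p-1-t)}$. A path ending at a vertex $v$ is a sequence of edges starting at some $S_i$ and going up one floor at a time to $v$ ($S_i\to V_{1,\cdot}\to W_{2,\cdot}\to V_{2,\cdot}\to W_{3,\cdot}\to\cdots\to v$); $\mathcal P(v)$ is the set of all paths ending at $v$. The blocks of a path are numbered $B^2,B^3,\dots,B^N$: $B^2$ is the block of the edge leaving $S_i$, and for $j\ge2$, $B^{2j-1}$ is the block of the edge into $W_{j,\cdot}$ and $B^{2j}$ the block of the edge into $V_{j,\cdot}$. Write $B^j=B_{m_j,n_j}$. Descents: $1\in\mathrm{Des}(P)$ iff $m_2=p^kt$ with $0\le t<\frac{p-1}{2}$; $2\notin\mathrm{Des}(P)$; for $3\le j<N$, $j\in\mathrm{Des}(P)$ iff $m_j>m_{j+1}$ and $n_j<n_{j+1}$. $\mathrm{des}(P)=|\mathrm{Des}(P)|$. The $p^k$-Fibonacci number of a vertex $v$ is $\mathcal M_v=\sum_{P\in\mathcal P(v)}\mathrm{des}(P)$. *)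

From mathcomp Require Import all_boot all_order all_algebra.
Set Implicit Arguments. Unset Strict Implicit. Unset Printing Implicit Defensive.

(* A path ending at V_{s,l} : S_i -> V_{1,l_1} -> W_{2,l'_2} -> V_{2,l_2} -> ...
   -> W_{s,l'_s} -> V_{s,l_s}.  It is encoded by the vertex indices:
   i < p^k(p-1), L = (l_1,...,l_s) with l_j < p^k, and
   L' = (l'_2,...,l'_s) with l'_j < p^(k+1).  Between two vertices there is at
   most one edge, so the vertex sequence determines the path. *)

Section Column.
Variables (p k : nat).
Local Notation pk := (p ^ k).

(* l_j for 1 <= j <= s *)
Definition lV (s : nat) (L : s.-tuple 'I_(p ^ k)) (j : nat) : nat :=
  nth 0 [seq val x | x <- L] j.-1.
(* l'_j for 2 <= j <= s *)
Definition lW (s : nat) (L' : (s.-1).-tuple 'I_(p ^ k.+1)) (j : nat) : nat :=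
  nth 0 [seq val x | x <- L'] (j - 2).

Definition edgeE1 (i l : nat) : bool := [exists t : 'I_(p.-1), i == pk * t + l].
Definition edgeE2 (l l' : nat) : bool := [exists b : 'I_p, l' == p * l + b].
Definition edgeE3 (l' l : nat) : bool := l == l' - pk * (l' %/ pk).

Definition is_path (s : nat) (i : nat) (L : s.-tuple 'I_(p ^ k))
    (L' : (s.-1).-tuple 'I_(p ^ k.+1)) : bool :=
  edgeE1 i (lV L 1) &&
  [forall j : 'I_s.+1, (2 <= j) ==>
     (edgeE2 (lV L j.-1) (lW L' j) && edgeE3 (lW L' j) (lV L j))].

(* Blocks B^j = B_{m_j, n_j}, 2 <= j <= 2s, as (m_j, n_j). *)
Definition block (s : nat) (i : nat) (L : s.-tuple 'I_(p ^ k))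
    (L' : (s.-1).-tuple 'I_(p ^ k.+1)) (j : nat) : nat * nat :=
  if j == 2 then
    let t := (i - lV L 1) %/ pk in (pk * t, pk * (p - 2 - t))
  else if odd j then
    (* j = 2r-1, r >= 2 : E2 block, beta = l'_r - p l_{r-1} *)
    let r := j.+1./2 in
    let c := (p - 1) * lV L r.-1 + (lW L' r - p * lV L r.-1) in
    (pk * (p - 1) - c, c)
  else
    let r := j./2 in
    let t := lW L' r %/ pk in (pk * t, pk * (p - 1 - t)).

Definition des (s : nat) (i : nat) (L : s.-tuple 'I_(p ^ k))
    (L' : (s.-1).-tuple 'I_(p ^ k.+1)) : nat :=
  let B := block i L L' in
  let N := s.*2 in
  ([exists t : 'I_((p - 1)./2), (B 2).1 == pk * t] : nat) +
  (* 2 is never a descent *)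
  \sum_(3 <= j < N) (((B j).1 > (B j.+1).1) && ((B j).2 < (B j.+1).2) : nat).

Definition fibM (s l : nat) : nat :=
  \sum_(i < pk * (p - 1))
   \sum_(L : s.-tuple 'I_(p ^ k))
    \sum_(L' : (s.-1).-tuple 'I_(p ^ k.+1) | is_path i L L' && (lV L s == l))
      des i L L'.

End Column.

(* For k = 0 every vertex V_{r,l} has l = 0, so a path to V_{s,0} is just a
   start i < p - 1 together with arbitrary indices l'_2, ..., l'_s < p, and all
   such choices are paths.  Writing p = 2h + 1, the blocks give: 1 is a descent
   iff i < h; 2r - 1 is a descent iff l'_r < h; 2r is a descent iff
   l'_r + l'_{r+1} >= p.  Summed over all paths, each of the 2s - 3 positions
   j >= 3 contributes (p - 1) p^(s-2) h descents (h good values of one index,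
   or C(p,2) = p h good pairs of adjacent ones), while position 1 contributes
   h p^(s-1). *)

From mathcomp Require Import all_boot all_order all_algebra.
From mathcomp Require Import zify ring.
Import GRing.Theory.

Set Implicit Arguments.
Unset Strict Implicit.
Unset Printing Implicit Defensive.

Lemma sum_tuple_cons (T : finType) n (F : n.+1.-tuple T -> nat) :
  \sum_(t : n.+1.-tuple T) F t = \sum_(x : T) \sum_(t : n.-tuple T) F [tuple of x :: t].
Proof.
rewrite pair_big /= (reindex (fun u : T * n.-tuple T => [tuple of u.1 :: u.2])) //=.
exists (fun t : n.+1.-tuple T => (thead t, [tuple of behead t])).
  by move=> [x t] _ /=; rewrite theadE; congr pair; apply: val_inj.
by move=> t _ /=; rewrite [in RHS](tuple_eta t).
Qed.

Section TupleSums.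
Variable q : nat.

Lemma sum_tuple_nth n r (F : nat -> nat) : r < n ->
  \sum_(t : n.-tuple 'I_q) F (nth 0 (map val t) r) = q ^ n.-1 * \sum_(x < q) F x.
Proof.
elim: n r => [|n IHn] [|r] //= lt_r_n; rewrite sum_tuple_cons /=.
  under eq_bigr do rewrite sum_nat_const card_tuple card_ord.
  by rewrite -big_distrr.
under eq_bigr do rewrite IHn //.
by rewrite sum_nat_const card_ord mulnA -expnS; case: n lt_r_n {IHn}.
Qed.

Lemma sum_tuple_nth2 n r (F : nat -> nat -> nat) : r.+1 < n ->
  \sum_(t : n.-tuple 'I_q) F (nth 0 (map val t) r) (nth 0 (map val t) r.+1)
   = q ^ n.-2 * \sum_(x < q) \sum_(y < q) F x y.
Proof.
elim: n r => [|n IHn] [|r] //= lt_r_n; rewrite sum_tuple_cons /=.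
  under eq_bigr => x _ do rewrite (@sum_tuple_nth _ _ (F x)) //.
  by rewrite -big_distrr.
under eq_bigr do rewrite IHn //.
by rewrite sum_nat_const card_ord mulnA -expnS; case: n lt_r_n {IHn} => [|[|n]].
Qed.

End TupleSums.

Lemma sum_ord_ltn n h : \sum_(x < n) (x < h : nat) = minn h n.
Proof.
elim: n => [|n IHn]; first by rewrite big_ord0 minn0.
by rewrite big_ord_recr /= IHn; case: (ltnP n h) => /= ?; lia.
Qed.

Lemma sum_ord_geq n c : \sum_(x < n) (c <= x : nat) = n - c.
Proof.
elim: n => [|n IHn]; first by rewrite big_ord0.
by rewrite big_ord_recr /= IHn; case: (leqP c n) => /= ?; lia.
Qed.

Lemma sum_pairs_geq n : \sum_(x < n) \sum_(y < n) (n <= x + y : nat) = 'C(n, 2).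
Proof.
rewrite -bin2_sum big_mkord; apply: eq_bigr => x _.
have le_x_n := ltnW (ltn_ord x).
rewrite -[in RHS](subKn le_x_n) -sum_ord_geq.
by apply: eq_bigr => y _; rewrite leq_subLR.
Qed.

Lemma nth_val_ltn q (t : seq 'I_q) j : 0 < q -> nth 0 (map val t) j < q.
Proof. by move=> q_gt0; elim: t j => [|x t IHt] [|j] //=; rewrite nth_nil. Qed.

Section ColumnZero.
Variable p : nat.

Lemma lV_k0 s (L : s.-tuple 'I_(p ^ 0)) j : lV L j = 0.
Proof. by have : lV L j < 1 := nth_val_ltn L j.-1 isT; case: (lV L j). Qed.

Lemma lW_ltn s (L' : s.-1.-tuple 'I_(p ^ 1)) j : 0 < p -> lW L' j < p.
Proof. exact: nth_val_ltn. Qed.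

Lemma is_path_k0 s i (L : s.-tuple 'I_(p ^ 0)) (L' : s.-1.-tuple 'I_(p ^ 1)) :
  i < p - 1 -> is_path i L L'.
Proof.
move=> lt_i_p; have p_gt0 : 0 < p by lia.
rewrite /is_path /edgeE1 /edgeE2 /edgeE3 !lV_k0 expn0; apply/andP; split.
  have lt_i_p' : i < p.-1 by lia.
  by apply/existsP; exists (Ordinal lt_i_p'); rewrite mul1n addn0.
apply/forallP => j; apply/implyP => _; rewrite !lV_k0 divn1 mul1n subnn eqxx andbT.
by apply/existsP; exists (Ordinal (lW_ltn L' j p_gt0)); rewrite muln0.
Qed.

Lemma block_k0 s i (L : s.-tuple 'I_(p ^ 0)) (L' : s.-1.-tuple 'I_(p ^ 1)) j :
  3 <= j -> block i L L' j =
    if odd j then (p - 1 - lW L' (uphalf j), lW L' (uphalf j))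
    else (lW L' j./2, p - 1 - lW L' j./2).
Proof.
move=> le3j; rewrite /block ifN; last by lia.
by rewrite !lV_k0 expn0 /= !(muln0, mul1n, subn0, add0n, divn1).
Qed.

Variable h : nat.
Hypothesis p_eq : p = h.*2.+1.

Lemma des_k0 s i (L : s.-tuple 'I_(p ^ 0)) (L' : s.-1.-tuple 'I_(p ^ 1)) :
  des i L L' = (i < h) + \sum_(3 <= j < s.*2)
    (if odd j then lW L' (uphalf j) < h else p <= lW L' j./2 + lW L' j./2.+1).
Proof.
have lW_p j : lW L' j < p by apply: lW_ltn; rewrite p_eq.
have half_p : (p - 1)./2 = h by rewrite p_eq subn1 /= doubleK.
rewrite /des half_p; congr (nat_of_bool _ + _).
  rewrite /block /= lV_k0 expn0 subn0 divn1 mul1n.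
  apply/existsP/idP => [[t /eqP ->] | lt_i_h]; first by rewrite mul1n.
  by exists (Ordinal lt_i_h); rewrite mul1n.
apply: eq_big_nat => j /andP [le3j _].
rewrite !block_k0 ?(leqW le3j) //=; case: (odd j) => /=.
  by congr nat_of_bool; have := lW_p (uphalf j); lia.
by congr nat_of_bool; have := lW_p j./2; have := lW_p j./2.+1; lia.
Qed.

Lemma sum_descent_at m j : 3 <= j < m.+2.*2 ->
  \sum_(L' : m.+2.-1.-tuple 'I_(p ^ 1))
    ((if odd j then lW L' (uphalf j) < h else p <= lW L' j./2 + lW L' j./2.+1) : nat)
  = p ^ m * h.
Proof.
case/andP=> le3j ltj; have j_eq := odd_double_half j.
case: (odd j) j_eq => /= j_eq; rewrite /lW.
  rewrite (sum_tuple_nth _ (fun b => (b < h : nat))); last by lia.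
  by rewrite expn1 sum_ord_ltn; congr muln; lia.
case: m ltj => [|m] ltj; first by lia.
have -> : j./2.+1 - 2 = (j./2 - 2).+1 by lia.
rewrite (sum_tuple_nth2 _ (fun x y => (p <= x + y : nat))); last by lia.
rewrite expn1 sum_pairs_geq bin2odd; last by rewrite p_eq /= odd_double.
by rewrite [in p.-1]p_eq /= doubleK mulnA -expnSr.
Qed.

Lemma fibM_k0 m : fibM p 0 m.+2 0 = h * (p ^ m.+1 + (p - 1) * m.*2.+1 * p ^ m).
Proof.
pose des_from (i : nat) := (i < h) * p ^ m.+1 + m.*2.+1 * (p ^ m * h).
have sum_des i (L : m.+2.-tuple 'I_(p ^ 0)) : i < p - 1 ->
    \sum_(L' : m.+2.-1.-tuple 'I_(p ^ 1) | is_path i L L' && (lV L m.+2 == 0))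
      des i L L' = des_from i.
  move=> lt_i_p; rewrite (eq_bigl xpredT) => [|L']; last by rewrite is_path_k0 // lV_k0.
  under eq_bigr do rewrite des_k0.
  rewrite big_split /= exchange_big /=.
  rewrite (eq_big_nat _ _ (fun j ltj => sum_descent_at ltj)).
  rewrite sum_nat_const card_tuple card_ord expn1 mulnC sum_nat_const_nat.
  by congr (_ + _ * _); lia.
rewrite /fibM (eq_bigr (fun i : 'I_(p ^ 0 * (p - 1)) => des_from i)); last first.
  move=> [i lt_i] _ /=; rewrite expn0 mul1n in lt_i.
  rewrite (eq_bigr (fun=> des_from i)) => [|L _]; last exact: sum_des.
  by rewrite sum_nat_const card_tuple card_ord -expnM mul0n mul1n.
rewrite big_split /= -big_distrl /= sum_ord_ltn sum_nat_const card_ord expn0 mul1n.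
rewrite (minn_idPl _); last by rewrite p_eq subn1 /= -addnn leq_addl.
ring.
Qed.
End ColumnZero.

Local Open Scope ring_scope.

Theorem mainTheorem5 (p s : nat) :
  prime p -> odd p -> (2 <= s)%N ->
  ((fibM p 0 s 0)%:R : rat) =
    ((p%:R - 1) / 2) *
    (2 * (s%:R - 1) * p%:R ^+ (s - 1) - (2 * s%:R - 3) * p%:R ^+ (s - 2)).
Proof.
move=> _ p_odd; case: s => [|[|m]] // _.
have p_eq : p = (p./2).*2.+1 by rewrite -[LHS]odd_double_half p_odd.
rewrite (fibM_k0 p_eq m) !subSS !subn0; move: (p./2) p_eq => h ->.
rewrite subn1 /= -!muln2 natrM natrD natrM natrM !natrX exprS.
by field.
Qed.
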